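(* Let $\mathbf{IL}\mathsf X$ be a Horn logic and $A$ a formula. If a systematic $\mathbf{IL}\mathsf X$-tableau for $\{\neg A\}$ closes, then $A$ is $\mathbf{IL}\mathsf X$-valid, i.e. $M,x\Vdash A$ for every $\mathbf{IL}\mathsf X$-model $M$ and every world $x$ of $M$.
   Context: Formulas: built from a countable set $\mathsf{Prop}$ of propositional variables by $\neg$, $\to$, unary $\Box$ and binary $\rhd$. $\mathbf{IL}$ is the modal logic with axioms all instances of propositional tautologies and the schemes $\Box(A\to B)\to(\Box A\to\Box B)$, $\Box(\Box A\to A)\to\Box A$, $\Box(A\to B)\to A\rhd B$, $(A\rhd B)\wedge(B\rhd C)\to A\rhd C$, $(A\rhd C)\wedge(B\rhd C)\to A\vee B\rhd C$, $A\rhd B\to(\Diamond A\to\Diamond B)$, $\Diamond A\rhd A$ ($\Diamond=\neg\Box\neg$), rules modus ponens and necessitation. An $\mathbf{IL}$-frame is $\langle W,R,S\rangle$ with $W\neq\emptyset$, $R$ transitive and Noetherian (no infinite chains $x_0Rx_1Rx_2\cdots$), $S$ ternary, $yS_xz$ meaning $(x,y,z)\in S$, each $S_x$ a reflexive transitive relation on $\{y:xRy\}$, and $xRyRz\Rightarrow yS_xz$. A model adds a valuation $V$; forcing standard for $\neg,\to$; $x\Vdash\Box A$ iff all $R$-successors force $A$; $x\Vdash A\rhd B$ iff for every $y$ with $xRy$, $y\Vdash A$ there is $z$ with $yS_xz$, $z\Vdash B$. $\mathbf{IL}\mathsf X$ is $\mathbf{IL}$ plus axiom schemes $\mathsf X$;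 it is Horn if there is a set $\mathcal C_{\mathsf X}$ of strict universal Horn sentences $\forall\cdots\forall(\varphi_1\wedge\dots\wedge\varphi_n\to\psi)$ ($n\ge0$, atomic $\varphi_i,\psi$) in the language $\{R,S\}$ such that an $\mathbf{IL}$-frame validates all theorems of $\mathbf{IL}\mathsf X$ iff it satisfies $\mathcal C_{\mathsf X}$; $\mathbf{IL}\mathsf X$-frames/models are those satisfying $\mathcal C_{\mathsf X}$. Labels: $0$; $\sigma Rn$ for a label $\sigma$, $n\in\mathbb N$; $\sigma S_\rho n$ for labels $\sigma,\rho$ with $\rho$ a strict non-empty prefix of $\sigma$. Extended formulas also allow unary operators $\Box_\rho$, $\rho$ a label. Labelled formula: $\sigma::A$. For a set $\Lambda$ of labels, $\mathbf R^\Lambda,\mathbf S^\Lambda$ are the least relations on $\Lambda$ with: (1) $\sigma,\sigma Rn\in\Lambda\Rightarrow\sigma\mathbf R\,\sigma Rn$; (2) $\mathbf R$ transitive; (3) $\sigma,\rho,\sigma S_\rho n\in\Lambda\Rightarrow\sigma\mathbf S_\rho\,\sigma S_\rho n$; (4) $\sigma\mathbf R\tau\Rightarrow\tau\mathbf S_\sigma\tau$; (5) $\rho\mathbf R\sigma\mathbf R\tau\Rightarrow\sigma\mathbf S_\rho\tau$; (6) $\sigma\mathbf S_\rho\tau\mathbf S_\rho\upsilon\Rightarrow\sigma\mathbf S_\rho\upsilon$; (7) $\sigma\mathbf S_\rho\tau\Rightarrow\rho\mathbf R\sigma,\rho\mathbf R\tau$; (8) $\langle\Lambda,\mathbf R^\Lambda,\mathbf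 S^\Lambda\rangle\models\mathcal C_{\mathsf X}$ (where $\sigma\mathbf S_\rho\tau$ means $(\rho,\sigma,\tau)\in\mathbf S^\Lambda$). For a branch $\mathcal B$, $\mathrm{lab}(\mathcal B)$ is the set of labels on it and relations refer to $\mathbf R^{\mathrm{lab}(\mathcal B)},\mathbf S^{\mathrm{lab}(\mathcal B)}$. A branch is closed if it contains $\sigma::A$ and $\sigma::\neg A$ for some $\sigma,A$, otherwise open. Systematic $\mathbf{IL}\mathsf X$-tableau for finite $\Gamma$: built in stages $T_0\subseteq T_1\subseteq\cdots$, nodes marked awake, asleep or finished. Stage 0: nodes $0::A$, $A\in\Gamma$, one below another, all awake. Stage $n+1$: choose an awake node $\sigma::A$ closest to the root (leftmost among ties). If $A$ is $p$ or $\neg p$ ($p\in\mathsf{Prop}$), mark it finished. Otherwise (new nodes marked awake; ''extend'' = append at the bottom): $\neg\neg B$: extend each open branch through it with $\sigma::B$; finished. $B\to C$: split each open branch through it, left $\sigma::\neg B$, right $\sigma::C$; finished. $\neg(B\to C)$: extend with $\sigma::B,\sigma::\neg C$; finished. $\Box B$: for each open branch $\mathcal B$ through it and each $\tau\in\mathrm{lab}(\mathcal B)$ with $\sigma\mathbf R\tau$, extend with $\tau::B$; asleep. $\neg\Box B$: for each open branch $\mathcal B$ through it, $n$ least with $\sigma Rn\notin\mathrm{lab}(\mathcal B)$, extend with $\sigma Rn::\neg B,\sigma Rn::\Box B$; finished; also mark awake every node $\tau::\Box D$, $\tau::D\rhd E$ on $\mathcal B$ with $\tau\mathbf R\,\sigma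 Rn$ and every $\tau::\Box_\kappa D$ on $\mathcal B$ with $\tau\mathbf S_\kappa\,\sigma Rn$. $\Box_\rho B$: for each branch $\mathcal B$ through it and each $\tau\in\mathrm{lab}(\mathcal B)$ with $\sigma\mathbf S_\rho\tau$, extend with $\tau::B$; asleep. $\neg\Box_\rho B$: for each open branch, $n$ least with $\sigma S_\rho n\notin\mathrm{lab}(\mathcal B)$, extend with $\sigma S_\rho n::\neg B,\sigma S_\rho n::\Box B$; finished; reawaken as in the $\neg\Box$ case with new label $\sigma S_\rho n$. $B\rhd C$: for each open branch $\mathcal B$ through it and each $\tau\in\mathrm{lab}(\mathcal B)$ with $\sigma\mathbf R\tau$, split, left $\tau::\neg B$, right $\tau::\neg\Box_\sigma\neg C$; asleep. $\neg(B\rhd C)$: for each open branch, $n$ least with $\sigma Rn\notin\mathrm{lab}(\mathcal B)$, extend with $\sigma Rn::B,\sigma Rn::\Box_\sigma\neg C,\sigma Rn::\Box\neg B$; finished; reawaken as in the $\neg\Box$ case. The systematic tableau is $\bigcup_iT_i$; it closes if all its branches are closed. *)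

From Stdlib Require Import List Arith.
Import ListNotations.

Inductive form : Type :=
| Var (p : nat)
| Neg (A : form)
| Imp (A B : form)
| Box (A : form)
| Rhd (A B : form).

Definition And (A B : form) : form := Neg (Imp A (Neg B)).
Definition Or (A B : form) : form := Imp (Neg A) B.
Definition Dia (A : form) : form := Neg (Box (Neg A)).

Fixpoint subst (s : nat -> form) (A : form) : form :=
  match A with
  | Var p => s p
  | Neg B => Neg (subst s B)
  | Imp B C => Imp (subst s B) (subst s C)
  | Box B => Box (subst s B)
  | Rhd B C => Rhd (subst s B) (subst s C)
  end.

Fixpoint is_prop (A : form) : Prop :=
  match A with
  | Var _ => True
  | Neg B => is_prop B
  | Imp B C => is_prop B /\ is_prop C
  | _ => False
  end.

Fixpoint beval (v : nat -> bool) (A : form) : bool :=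
  match A with
  | Var p => v p
  | Neg B => negb (beval v B)
  | Imp B C => implb (beval v B) (beval v C)
  | _ => false
  end.

Definition tautology (A : form) : Prop :=
  is_prop A /\ forall v, beval v A = true.

(* IL X : axiom schemes X are given as formulas whose propositional
   variables act as metavariables; their instances are substitution
   instances. *)
Inductive ILX (X : form -> Prop) : form -> Prop :=
| ax_taut : forall P s, tautology P -> ILX X (subst s P)
| ax_K : forall A B, ILX X (Imp (Box (Imp A B)) (Imp (Box A) (Box B)))
| ax_L : forall A, ILX X (Imp (Box (Imp (Box A) A)) (Box A))
| ax_J1 : forall A B, ILX X (Imp (Box (Imp A B)) (Rhd A B))
| ax_J2 : forall A B C, ILX X (Imp (And (Rhd A B) (Rhd B C)) (Rhd A C))
| ax_J3 : forall A B C, ILX X (Imp (And (Rhd A C) (Rhd B C)) (Rhd (Or A B) C))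
| ax_J4 : forall A B, ILX X (Imp (Rhd A B) (Imp (Dia A) (Dia B)))
| ax_J5 : forall A, ILX X (Rhd (Dia A) A)
| ax_X : forall P s, X P -> ILX X (subst s P)
| r_MP : forall A B, ILX X (Imp A B) -> ILX X A -> ILX X B
| r_Nec : forall A, ILX X A -> ILX X (Box A).

(* IL-frames and models.  Srel x y z  means  y S_x z.                  *)
Record ILFrame (W : Type) (Rel : W -> W -> Prop) (Srel : W -> W -> W -> Prop)
  : Prop := {
  fr_nonempty : inhabited W;
  fr_trans : forall x y z, Rel x y -> Rel y z -> Rel x z;
  fr_noeth : ~ exists f : nat -> W, forall n, Rel (f n) (f (S n));
  fr_S_dom : forall x y z, Srel x y z -> Rel x y /\ Rel x z;
  fr_S_refl : forall x y, Rel x y -> Srel x y y;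
  fr_S_trans : forall x y z u, Srel x y z -> Srel x z u -> Srel x y u;
  fr_RS : forall x y z, Rel x y -> Rel y z -> Srel x y z
}.

Fixpoint forces {W : Type} (Rel : W -> W -> Prop) (Srel : W -> W -> W -> Prop)
  (V : nat -> W -> Prop) (x : W) (A : form) : Prop :=
  match A with
  | Var p => V p x
  | Neg B => ~ forces Rel Srel V x B
  | Imp B C => forces Rel Srel V x B -> forces Rel Srel V x C
  | Box B => forall y, Rel x y -> forces Rel Srel V y B
  | Rhd B C => forall y, Rel x y -> forces Rel Srel V y B ->
                 exists z, Srel x y z /\ forces Rel Srel V z C
  end.

(* Variables are v_0, v_1, ... (nat).  HS i j k : (v_i,v_j,v_k) in S,  *)
(* i.e. v_j S_{v_i} v_k.                                               *)
Inductive hatom : Type :=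
| HR (i j : nat)
| HS (i j k : nat).

Record horn : Type := mkHorn { h_prem : list hatom; h_concl : hatom }.

Definition hatom_holds {D : Type} (Rel : D -> D -> Prop) (Srel : D -> D -> D -> Prop)
  (f : nat -> D) (a : hatom) : Prop :=
  match a with
  | HR i j => Rel (f i) (f j)
  | HS i j k => Srel (f i) (f j) (f k)
  end.

Definition horn_holds_in {D : Type} (dom : D -> Prop) (Rel : D -> D -> Prop)
  (Srel : D -> D -> D -> Prop) (h : horn) : Prop :=
  forall f : nat -> D, (forall i, dom (f i)) ->
    (forall a, In a (h_prem h) -> hatom_holds Rel Srel f a) ->
    hatom_holds Rel Srel f (h_concl h).

Definition horn_witness (X : form -> Prop) (C : horn -> Prop) : Prop :=
  forall (W : Type) (Rel : W -> W -> Prop) (Srel : W -> W -> W -> Prop),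
    ILFrame W Rel Srel ->
    ((forall A, ILX X A -> forall V x, forces Rel Srel V x A) <->
     (forall h, C h -> horn_holds_in (fun _ => True) Rel Srel h)).

Inductive label : Type :=
| L0
| LR (s : label) (n : nat)            (* s R n *)
| LS (s rho : label) (n : nat).       (* s S_rho n *)

Inductive xform : Type :=
| XVar (p : nat)
| XNeg (A : xform)
| XImp (A B : xform)
| XBox (A : xform)
| XRhd (A B : xform)
| XBoxL (rho : label) (A : xform).

Fixpoint emb (A : form) : xform :=
  match A with
  | Var p => XVar p
  | Neg B => XNeg (emb B)
  | Imp B C => XImp (emb B) (emb C)
  | Box B => XBox (emb B)
  | Rhd B C => XRhd (emb B) (emb C)
  end.

(* R^Lambda, S^Lambda : the least relations on Lambda with (1)-(8).
   FR a b : a R b ;  FS rho a b : a S_rho b. *)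
Inductive rfact : Type :=
| FR (a b : label)
| FS (rho a b : label).

Definition atom_fact (f : nat -> label) (a : hatom) : rfact :=
  match a with
  | HR i j => FR (f i) (f j)
  | HS i j k => FS (f i) (f j) (f k)
  end.

Inductive RSder (C : horn -> Prop) (L : label -> Prop) : rfact -> Prop :=
| d1 : forall s n, L s -> L (LR s n) -> RSder C L (FR s (LR s n))
| d2 : forall a b c, RSder C L (FR a b) -> RSder C L (FR b c) -> RSder C L (FR a c)
| d3 : forall s rho n, L s -> L rho -> L (LS s rho n) ->
       RSder C L (FS rho s (LS s rho n))
| d4 : forall s t, RSder C L (FR s t) -> RSder C L (FS s t t)
| d5 : forall r s t, RSder C L (FR r s) -> RSder C L (FR s t) -> RSder C L (FS r s t)
| d6 : forall r s t u, RSder C L (FS r s t) -> RSder C L (FS r t u) ->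
       RSder C L (FS r s u)
| d7a : forall r s t, RSder C L (FS r s t) -> RSder C L (FR r s)
| d7b : forall r s t, RSder C L (FS r s t) -> RSder C L (FR r t)
| d8 : forall h (f : nat -> label), C h -> (forall i, L (f i)) ->
       (forall a, In a (h_prem h) -> RSder C L (atom_fact f a)) ->
       RSder C L (atom_fact f (h_concl h)).

Definition Rl (C : horn -> Prop) (L : label -> Prop) (a b : label) : Prop :=
  RSder C L (FR a b).
Definition Sl (C : horn -> Prop) (L : label -> Prop) (rho a b : label) : Prop :=
  RSder C L (FS rho a b).

(* Tableaux: finite trees given as partial maps from positions (paths  *)
(* of child indices, 0 = left, 1 = right) to nodes.                    *)
Inductive status : Type := Awake | Asleep | Finished.

Record node : Type := mkNode { nlab : label; nfor : xform; nst : status }.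

Definition pos := list nat.
Definition tab := pos -> option node.

Definition prefix (r p : pos) : Prop := exists s, p = r ++ s.

Definition lab (T : tab) (p : pos) (s : label) : Prop :=
  exists r nd, prefix r p /\ T r = Some nd /\ nlab nd = s.

Definition is_leaf (T : tab) (p : pos) : Prop :=
  T p <> None /\ forall i, T (p ++ [i]) = None.

Definition open_br (T : tab) (p : pos) : Prop :=
  ~ exists r1 r2 n1 n2, prefix r1 p /\ prefix r2 p /\
      T r1 = Some n1 /\ T r2 = Some n2 /\
      nlab n1 = nlab n2 /\ nfor n2 = XNeg (nfor n1).

Fixpoint lex_le (a b : pos) : Prop :=
  match a, b with
  | [], _ => True
  | _ :: _, [] => False
  | x :: a', y :: b' => x < y \/ (x = y /\ lex_le a' b')
  end.

Definition selected (T : tab) (q : pos) : Prop :=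
  exists nd, T q = Some nd /\ nst nd = Awake /\
    forall q' nd', T q' = Some nd' -> nst nd' = Awake ->
      length q < length q' \/ (length q = length q' /\ lex_le q q').

Definition no_awake (T : tab) : Prop :=
  forall q nd, T q = Some nd -> nst nd <> Awake.

(* what is appended at the bottom of a branch: a sequence of linear
   extensions and splits, performed one after the other *)
Inductive entry : Type :=
| Lin (f : label * xform)
| Spl (f g : label * xform).

Definition entry_at (e : entry) (c : nat) : option (label * xform) :=
  match e with
  | Lin f => match c with 0 => Some f | _ => None end
  | Spl f g => match c with 0 => Some f | 1 => Some g | _ => None end
  end.

(* content of the new node at relative position w below the leaf *)
Fixpoint grown (es : list entry) (w : pos) : option (label * xform) :=
  match es, w with
  | e :: es', c :: w' =>
      match entry_at e c with
      | None => None
      | Some f => match w' with [] => Some f | _ => grown es' w' end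
      end
  | _, _ => None
  end.

Definition enum_of {A : Type} (l : list A) (P : A -> Prop) : Prop :=
  NoDup l /\ forall x, In x l <-> P x.

Definition freshR (L : label -> Prop) (s : label) (n : nat) : Prop :=
  ~ L (LR s n) /\ forall m, m < n -> L (LR s m).
Definition freshS (L : label -> Prop) (s rho : label) (n : nat) : Prop :=
  ~ L (LS s rho n) /\ forall m, m < n -> L (LS s rho m).

Definition rule_ext (C : horn -> Prop) (T : tab) (s : label) (A : xform)
  (p : pos) (es : list entry) : Prop :=
  let L := lab T p in
  match A with
  | XVar _ => es = []
  | XNeg (XVar _) => es = []
  | XNeg (XNeg B) => es = [Lin (s, B)]
  | XImp B D => es = [Spl (s, XNeg B) (s, D)]
  | XNeg (XImp B D) => es = [Lin (s, B); Lin (s, XNeg D)]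
  | XBox B => exists ts, enum_of ts (fun t => L t /\ Rl C L s t) /\
                es = map (fun t => Lin (t, B)) ts
  | XNeg (XBox B) => exists n, freshR L s n /\
                es = [Lin (LR s n, XNeg B); Lin (LR s n, XBox B)]
  | XBoxL rho B => exists ts, enum_of ts (fun t => L t /\ Sl C L rho s t) /\
                es = map (fun t => Lin (t, B)) ts
  | XNeg (XBoxL rho B) => exists n, freshS L s rho n /\
                es = [Lin (LS s rho n, XNeg B); Lin (LS s rho n, XBox B)]
  | XRhd B D => exists ts, enum_of ts (fun t => L t /\ Rl C L s t) /\
                es = map (fun t => Spl (t, XNeg B) (t, XNeg (XBoxL s (XNeg D)))) ts
  | XNeg (XRhd B D) => exists n, freshR L s n /\
                es = [Lin (LR s n, B); Lin (LR s n, XBoxL s (XNeg D));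
                      Lin (LR s n, XBox (XNeg B))]
  end.

Definition new_label (T : tab) (s : label) (A : xform) (p : pos) (k : label) : Prop :=
  match A with
  | XNeg (XBox _) => exists n, freshR (lab T p) s n /\ k = LR s n
  | XNeg (XRhd _ _) => exists n, freshR (lab T p) s n /\ k = LR s n
  | XNeg (XBoxL rho _) => exists n, freshS (lab T p) s rho n /\ k = LS s rho n
  | _ => False
  end.

Definition after_status (A : xform) : status :=
  match A with
  | XBox _ => Asleep
  | XBoxL _ _ => Asleep
  | XRhd _ _ => Asleep
  | _ => Finished
  end.

(* Box_rho rules act on every branch, the others on open branches *)
Definition all_branches (A : xform) : Prop :=
  match A with XBoxL _ _ => True | _ => False end.

Definition processed (T : tab) (q : pos) (A : xform) (p : pos) : Prop :=
  is_leaf T p /\ prefix q p /\ (open_br T p \/ all_branches A).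

Definition reawakens (C : horn -> Prop) (L : label -> Prop) (k : label) (nd : node) : Prop :=
  match nfor nd with
  | XBox _ => Rl C L (nlab nd) k
  | XRhd _ _ => Rl C L (nlab nd) k
  | XBoxL kap _ => Sl C L kap (nlab nd) k
  | _ => False
  end.

Definition add_lab (L : label -> Prop) (k : label) : label -> Prop :=
  fun t => L t \/ t = k.

Definition reawake (C : horn -> Prop) (T : tab) (q : pos) (s : label) (A : xform)
  (r : pos) : Prop :=
  exists p k nd, processed T q A p /\ prefix r p /\ new_label T s A p k /\
    T r = Some nd /\ reawakens C (add_lab (lab T p) k) k nd.

Definition step (C : horn -> Prop) (T T' : tab) : Prop :=
  (no_awake T /\ forall r, T' r = T r) \/
  exists q nd (E : pos -> list entry),
    selected T q /\ T q = Some nd /\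
    (forall p, processed T q (nfor nd) p ->
       rule_ext C T (nlab nd) (nfor nd) p (E p)) /\
    forall r,
      (forall m, T r = Some m ->
         (r = q -> T' r = Some (mkNode (nlab m) (nfor m) (after_status (nfor nd)))) /\
         (r <> q -> reawake C T q (nlab nd) (nfor nd) r ->
            T' r = Some (mkNode (nlab m) (nfor m) Awake)) /\
         (r <> q -> ~ reawake C T q (nlab nd) (nfor nd) r -> T' r = Some m)) /\
      (T r = None ->
         (forall p w f, processed T q (nfor nd) p -> r = p ++ w ->
            grown (E p) w = Some f -> T' r = Some (mkNode (fst f) (snd f) Awake)) /\
         ((~ exists p w f, processed T q (nfor nd) p /\ r = p ++ w /\
               grown (E p) w = Some f) -> T' r = None)).

Fixpoint init_tab (G : list xform) (r : pos) : option node :=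
  match G, r with
  | A :: _, [] => Some (mkNode L0 A Awake)
  | _ :: G', 0 :: r' => init_tab G' r'
  | _, _ => None
  end.

Definition systematic (C : horn -> Prop) (G : list xform) (stage : nat -> tab) : Prop :=
  (forall r, stage 0 r = init_tab G r) /\
  forall n, step C (stage n) (stage (S n)).

Definition in_union (stage : nat -> tab) (r : pos) : Prop :=
  exists n, stage n r <> None.

Definition union_branch (stage : nat -> tab) (P : pos -> Prop) : Prop :=
  P [] /\
  (forall r, P r -> in_union stage r) /\
  (forall r r', P r -> prefix r' r -> P r') /\
  (forall r1 r2, P r1 -> P r2 -> prefix r1 r2 \/ prefix r2 r1) /\
  (forall r, P r -> (exists i, in_union stage (r ++ [i])) -> exists i, P (r ++ [i])).

Definition branch_closed (stage : nat -> tab) (P : pos -> Prop) : Prop :=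
  exists r1 r2 n n1 n2, P r1 /\ P r2 /\ stage n r1 = Some n1 /\ stage n r2 = Some n2 /\
    nlab n1 = nlab n2 /\ nfor n2 = XNeg (nfor n1).

Definition tableau_closes (stage : nat -> tab) : Prop :=
  forall P, union_branch stage P -> branch_closed stage P.

From Stdlib Require Import List Lia Classical ClassicalEpsilon FunctionalExtensionality.
Import ListNotations.

(* Suppose x does not force A.  Call a branch satisfiable if its labels can be
   mapped to worlds so that labels [s R n] and [s S_rho n] go to R- resp.
   S_rho-successors and every node [s :: B] is true at the image of [s]; by the
   frame conditions and the Horn sentences of C, the derived relations R^Lambda
   and S^Lambda then hold between the images as well.  Each rule applied to a
   true node keeps some extension of the branch true: for the rules creating a
   label one picks, R being Noetherian, an R-maximal witness, at which the added
   [Box] formulas hold.  The initial one-node branch is satisfiable, so every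
   stage has a satisfiable branch extending one of the previous stage; their
   union is an open branch of the systematic tableau, which therefore does not
   close. *)

Lemma prefix_refl (p : pos) : prefix p p.
Proof. exists []. now rewrite app_nil_r. Qed.

Lemma prefix_app (p w : pos) : prefix p (p ++ w).
Proof. now exists w. Qed.

Lemma prefix_trans (a b c : pos) : prefix a b -> prefix b c -> prefix a c.
Proof. intros [u ->] [v ->]. exists (u ++ v). now rewrite app_assoc. Qed.

Lemma prefix_nil (p : pos) : prefix [] p.
Proof. now exists p. Qed.

Lemma prefix_nil_inv (r : pos) : prefix r [] -> r = [].
Proof. intros [u Hu]. now destruct r. Qed.

Lemma prefix_total (a b c : pos) : prefix a c -> prefix b c -> prefix a b \/ prefix b a.
Proof.
  intros [u Hu] [v Hv]. rewrite Hu in Hv.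
  destruct (app_eq_app _ _ _ _ Hv) as [l [[H _]|[H _]]].
  - right. now exists l.
  - left. now exists l.
Qed.

Definition prefix_closed (T : tab) : Prop :=
  forall r s, T (r ++ s) <> None -> T r <> None.

Lemma prefix_closed_prefix (T : tab) (r p : pos) :
  prefix_closed T -> T p <> None -> prefix r p -> T r <> None.
Proof. intros Htc Hp [u ->]. eapply Htc; eauto. Qed.

Lemma leaf_extension_none (T : tab) (p u : pos) :
  prefix_closed T -> is_leaf T p -> u <> [] -> T (p ++ u) = None.
Proof.
  intros Htc [_ Hl] Hu. destruct u as [|i u]; [congruence|].
  destruct (T (p ++ i :: u)) eqn:Hi; auto. exfalso.
  apply (Htc (p ++ [i]) u); [rewrite <- app_assoc; simpl; congruence | apply Hl].
Qed.

Lemma leaf_extension_nil (T : tab) (p u : pos) :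
  prefix_closed T -> is_leaf T p -> T (p ++ u) <> None -> u = [].
Proof.
  intros Htc Hl H. destruct u; auto.
  exfalso. apply H, leaf_extension_none; auto; congruence.
Qed.

Fixpoint full_path (es : list entry) (w : pos) : Prop :=
  match es, w with
  | [], [] => True
  | e :: es', c :: w' => entry_at e c <> None /\ full_path es' w'
  | _, _ => False
  end.

Lemma grown_prefix (es : list entry) (u v : pos) :
  grown es (u ++ v) <> None -> u <> [] -> grown es u <> None.
Proof.
  revert u. induction es as [|e es IH]; intros u H Hu.
  - destruct u; simpl in *; congruence.
  - destruct u as [|c u]; [congruence|]. simpl in *.
    destruct (entry_at e c); [|congruence].
    destruct u as [|c' u]; [congruence|].
    apply (IH (c' :: u)); [exact H | congruence].
Qed.

Lemma full_path_end (es : list entry) (w : pos) (i : nat) :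
  full_path es w -> grown es (w ++ [i]) = None.
Proof.
  revert w. induction es as [|e es IH]; intros w H.
  - destruct w; simpl in *; [reflexivity | contradiction].
  - destruct w as [|c w]; simpl in *; [contradiction|]. destruct H as [_ H].
    destruct (entry_at e c); [|reflexivity].
    destruct (w ++ [i]) eqn:Hw; [destruct w; discriminate|].
    rewrite <- Hw. now apply IH.
Qed.

Lemma full_path_grown (es : list entry) (w : pos) :
  full_path es w -> w <> [] -> grown es w <> None.
Proof.
  revert w. induction es as [|e es IH]; intros w H Hw.
  - destruct w; simpl in *; [congruence | contradiction].
  - destruct w as [|c w]; simpl in *; [contradiction|]. destruct H as [H1 H2].
    destruct (entry_at e c); [|congruence].
    destruct w; [congruence|]. apply IH; auto; congruence.
Qed.

Lemma full_path_grown_prefix (es : list entry) (w u : pos) :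
  full_path es w -> u <> [] -> prefix u w -> grown es u <> None.
Proof.
  intros H Hu [v ->]. apply (grown_prefix es u v); auto.
  apply full_path_grown; auto. destruct u; [congruence | discriminate].
Qed.

Lemma full_path_head_lin (g : label * xform) (rest : list entry) (w : pos) :
  full_path (Lin g :: rest) w -> prefix [0] w /\ grown (Lin g :: rest) [0] = Some g.
Proof.
  destruct w as [|[|c] w]; simpl; [tauto | | tauto].
  intros _. split; [now exists w | reflexivity].
Qed.

Lemma full_path_choice (G : label * xform -> Prop) (es : list entry) :
  (forall e, In e es -> exists c g, entry_at e c = Some g /\ G g) ->
  exists w, full_path es w /\ forall u g, grown es u = Some g -> prefix u w -> G g.
Proof.
  induction es as [|e es IH]; intros H.
  - exists []. split; [exact I|]. intros [|] g Hg _; discriminate.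
  - destruct (H e (or_introl eq_refl)) as [c [g [Hc Hg]]].
    destruct IH as [w [Hw Hw2]]; [intros; apply H; now right|].
    exists (c :: w). split; [simpl; split; congruence|].
    intros [|c' u] g' Hu [v Hv]; [discriminate|].
    injection Hv as -> Hv. simpl in Hu. rewrite Hc in Hu.
    destruct u as [|c'' u]; [congruence|].
    apply (Hw2 (c'' :: u)); auto. now exists v.
Qed.

Definition update (C : horn -> Prop) (T T' : tab) (q : pos) (nd : node)
  (E : pos -> list entry) : Prop :=
  forall r,
    (forall m, T r = Some m ->
       (r = q -> T' r = Some (mkNode (nlab m) (nfor m) (after_status (nfor nd)))) /\
       (r <> q -> reawake C T q (nlab nd) (nfor nd) r ->
          T' r = Some (mkNode (nlab m) (nfor m) Awake)) /\
       (r <> q -> ~ reawake C T q (nlab nd) (nfor nd) r -> T' r = Some m)) /\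
    (T r = None ->
       (forall p w f, processed T q (nfor nd) p -> r = p ++ w ->
          grown (E p) w = Some f -> T' r = Some (mkNode (fst f) (snd f) Awake)) /\
       ((~ exists p w f, processed T q (nfor nd) p /\ r = p ++ w /\
             grown (E p) w = Some f) -> T' r = None)).

Section Update.
Variables (C : horn -> Prop) (T T' : tab) (q : pos) (nd : node) (E : pos -> list entry).
Hypothesis HT : update C T T' q nd E.

Let Pr (p : pos) : Prop := processed T q (nfor nd) p.

Lemma update_keeps (r : pos) (m : node) : T r = Some m ->
  exists m', T' r = Some m' /\ nlab m' = nlab m /\ nfor m' = nfor m.
Proof.
  intros Hm. destruct (proj1 (HT r) m Hm) as [Ha [Hb Hc]].
  destruct (classic (r = q)) as [e|ne].
  - eexists; split; [apply Ha; auto|]; simpl; auto.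
  - destruct (classic (reawake C T q (nlab nd) (nfor nd) r)).
    + eexists; split; [apply Hb; auto|]; simpl; auto.
    + eexists; split; [apply Hc; auto|]; auto.
Qed.

Lemma update_defined (r : pos) : T r <> None -> T' r <> None.
Proof.
  destruct (T r) as [m|] eqn:Hm; [intros _ | congruence].
  destruct (update_keeps r m Hm) as [m' [-> _]]. discriminate.
Qed.

Lemma update_grown (r p w : pos) (g : label * xform) :
  T r = None -> Pr p -> r = p ++ w -> grown (E p) w = Some g ->
  T' r = Some (mkNode (fst g) (snd g) Awake).
Proof. intros H. exact (proj1 (proj2 (HT r) H) p w g). Qed.

Lemma update_origin (r : pos) : T' r <> None ->
  T r <> None \/ exists p w g, Pr p /\ r = p ++ w /\ grown (E p) w = Some g.
Proof.
  intros H. destruct (T r) eqn:Hr; [left; congruence | right].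
  apply NNPP. intros Hn. exact (H (proj2 (proj2 (HT r) Hr) Hn)).
Qed.

Lemma update_prefix_closed : prefix_closed T -> prefix_closed T'.
Proof.
  intros Htc r s H. destruct (update_origin _ H) as [H1|[p [w [g [Hp [Hr Hg]]]]]].
  - apply update_defined. eapply Htc; eauto.
  - destruct (app_eq_app _ _ _ _ Hr) as [l [[Ha Hb]|[Ha Hb]]].
    + destruct l as [|c l].
      * rewrite app_nil_r in Ha. subst. apply update_defined, Hp.
      * destruct (T r) eqn:Er; [apply update_defined; congruence|].
        assert (Hgl : grown (E p) (c :: l) <> None)
          by (apply (grown_prefix _ _ s); [rewrite <- Hb; congruence | discriminate]).
        destruct (grown (E p) (c :: l)) as [g'|] eqn:G; [|congruence].
        rewrite (update_grown r p (c :: l) g' Er Hp Ha G). discriminate.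
    + apply update_defined. destruct Hp as [[Hl _] _]. apply (Htc r l). congruence.
Qed.

Section Branch.
Variables (p w : pos).
Hypothesis Htc : prefix_closed T.
Hypothesis Hleaf : is_leaf T p.
Hypothesis Hpath : Pr p -> full_path (E p) w.
Hypothesis Hstay : ~ Pr p -> w = [].

Lemma update_new_nodes (u : pos) (g : label * xform) :
  u <> [] -> prefix u w -> grown (E p) u = Some g ->
  T' (p ++ u) = Some (mkNode (fst g) (snd g) Awake).
Proof.
  intros Hu Hpre Hg. eapply update_grown; eauto.
  - apply leaf_extension_none; auto.
  - destruct (classic (Pr p)) as [HP|HP]; auto. exfalso.
    rewrite (Hstay HP) in Hpre. apply prefix_nil_inv in Hpre. congruence.
Qed.

Lemma update_leaf : is_leaf T' (p ++ w).
Proof.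
  split.
  - destruct (classic (w = [])) as [->|Hw].
    + rewrite app_nil_r. apply update_defined, Hleaf.
    + destruct (classic (Pr p)) as [HP|HP]; [|contradiction (Hstay HP)].
      pose proof (full_path_grown _ _ (Hpath HP) Hw) as Hg.
      destruct (grown (E p) w) as [g|] eqn:G; [|congruence].
      rewrite (update_new_nodes w g); auto using prefix_refl. discriminate.
  - intros i. destruct (T' ((p ++ w) ++ [i])) eqn:Hi; auto. exfalso.
    destruct (update_origin ((p ++ w) ++ [i])) as [H1|[p0 [v [g [Hp [Hr Hg]]]]]];
      [congruence| |].
    + apply H1. rewrite <- app_assoc. apply leaf_extension_none; auto. destruct w; discriminate.
    + rewrite <- app_assoc in Hr.
      assert (Hpp : p0 = p /\ v = w ++ [i]).
      { destruct (app_eq_app _ _ _ _ Hr) as [l [[Ha Hb]|[Ha Hb]]].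
        - assert (l = []) as ->.
          { apply (leaf_extension_nil T p0 l Htc (proj1 Hp)). rewrite <- Ha. apply Hleaf. }
          rewrite app_nil_r in Ha. auto.
        - assert (l = []) as ->.
          { apply (leaf_extension_nil T p l Htc Hleaf). rewrite <- Ha. apply Hp. }
          rewrite app_nil_r in Ha. auto. }
      destruct Hpp as [-> ->]. rewrite full_path_end in Hg; [discriminate | auto].
Qed.

Lemma update_branch_nodes (r : pos) (nd' : node) :
  prefix r (p ++ w) -> T' r = Some nd' ->
  (exists m, prefix r p /\ T r = Some m /\ nlab nd' = nlab m /\ nfor nd' = nfor m) \/
  (exists u g, u <> [] /\ prefix u w /\ grown (E p) u = Some g /\
     nlab nd' = fst g /\ nfor nd' = snd g).
Proof.
  intros [s Hs] Hnd.
  assert (Hold : prefix r p -> exists m, T r = Some m /\ nlab nd' = nlab m /\ nfor nd' = nfor m).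
  { intros Hr. assert (T r <> None) by (eapply prefix_closed_prefix; eauto; apply Hleaf).
    destruct (T r) as [m|] eqn:Er; [|congruence].
    destruct (update_keeps r m Er) as [m' [Hm1 Hm2]]. rewrite Hnd in Hm1.
    injection Hm1 as <-. eauto. }
  destruct (app_eq_app _ _ _ _ Hs) as [l [[Ha Hb]|[Ha Hb]]].
  - left. assert (Hr : prefix r p) by (now exists l).
    destruct (Hold Hr) as [m Hm]. eauto.
  - destruct l as [|c l].
    + left. rewrite app_nil_r in Ha. subst r.
      destruct (Hold (prefix_refl p)) as [m Hm]. exists m. auto using prefix_refl.
    + right. destruct (classic (Pr p)) as [HP|HP];
        [|rewrite (Hstay HP) in Hb; discriminate].
      assert (Hpre : prefix (c :: l) w) by (now exists s).
      assert (Hne : c :: l <> []) by discriminate.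
      pose proof (full_path_grown_prefix _ _ _ (Hpath HP) Hne Hpre) as G.
      destruct (grown (E p) (c :: l)) as [g|] eqn:Gs; [|congruence].
      rewrite Ha, (update_new_nodes (c :: l) g) in Hnd; auto.
      injection Hnd as <-. exists (c :: l), g. auto.
Qed.

End Branch.
End Update.

Lemma step_cases (C : horn -> Prop) (T T' : tab) : step C T T' ->
  (forall r, T' r = T r) \/
  exists q nd E, T q = Some nd /\
    (forall p, processed T q (nfor nd) p -> rule_ext C T (nlab nd) (nfor nd) p (E p)) /\
    update C T T' q nd E.
Proof.
  intros [[_ Heq]|[q [nd [E [_ [Hq [Hrule HT]]]]]]]; [left; auto | right].
  exists q, nd, E. auto.
Qed.

Lemma step_keeps (C : horn -> Prop) (T T' : tab) (r : pos) (m : node) :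
  step C T T' -> T r = Some m ->
  exists m', T' r = Some m' /\ nlab m' = nlab m /\ nfor m' = nfor m.
Proof.
  intros Hs Hm. destruct (step_cases _ _ _ Hs) as [Heq|[q [nd [E [_ [_ HT]]]]]].
  - exists m. rewrite Heq. auto.
  - exact (update_keeps C T T' q nd E HT r m Hm).
Qed.

Lemma step_prefix_closed (C : horn -> Prop) (T T' : tab) :
  prefix_closed T -> step C T T' -> prefix_closed T'.
Proof.
  intros Htc Hs. destruct (step_cases _ _ _ Hs) as [Heq|[q [nd [E [_ [_ HT]]]]]].
  - intros r s. rewrite !Heq. apply Htc.
  - exact (update_prefix_closed C T T' q nd E HT Htc).
Qed.

Section Semantics.
Variables (C : horn -> Prop) (W : Type) (Rel : W -> W -> Prop)
  (Srel : W -> W -> W -> Prop) (V : nat -> W -> Prop).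
Hypothesis HF : ILFrame W Rel Srel.
Hypothesis HC : forall h, C h -> horn_holds_in (fun _ => True) Rel Srel h.

Fixpoint xforces (f : label -> W) (w : W) (A : xform) : Prop :=
  match A with
  | XVar p => V p w
  | XNeg B => ~ xforces f w B
  | XImp B D => xforces f w B -> xforces f w D
  | XBox B => forall y, Rel w y -> xforces f y B
  | XRhd B D => forall y, Rel w y -> xforces f y B -> exists z, Srel w y z /\ xforces f z D
  | XBoxL rho B => forall t, Srel (f rho) w t -> xforces f t B
  end.

Fixpoint labels_in (L : label -> Prop) (A : xform) : Prop :=
  match A with
  | XVar _ => True
  | XNeg B | XBox B => labels_in L B
  | XImp B D | XRhd B D => labels_in L B /\ labels_in L D
  | XBoxL rho B => L rho /\ labels_in L B
  end.

Lemma labels_in_mono (L L' : label -> Prop) (A : xform) :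
  (forall t, L t -> L' t) -> labels_in L A -> labels_in L' A.
Proof. intros H; induction A; simpl; intuition. Qed.

Lemma labels_in_emb (L : label -> Prop) (A : form) : labels_in L (emb A).
Proof. induction A; simpl; auto. Qed.

Lemma xforces_agree (L : label -> Prop) (f f' : label -> W) (A : xform) :
  (forall t, L t -> f' t = f t) -> labels_in L A ->
  forall w, xforces f w A <-> xforces f' w A.
Proof.
  intros Hag. induction A; simpl; intros Hl w.
  - tauto.
  - rewrite IHA; tauto.
  - destruct Hl. rewrite IHA1, IHA2; tauto.
  - split; intros H y Hy; apply IHA; auto.
  - destruct Hl as [H1 H2].
    split; intros H y Hy Hb; destruct (H y Hy) as [z [Hz Hd]];
      try (apply IHA1; auto); exists z; split; auto; apply IHA2; auto.
  - destruct Hl as [H1 H2]. rewrite (Hag rho H1).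
    split; intros H t Ht; apply IHA; auto.
Qed.

Lemma xforces_emb (f : label -> W) (w : W) (A : form) :
  xforces f w (emb A) <-> forces Rel Srel V w A.
Proof.
  revert w. induction A; simpl; intros w.
  - tauto.
  - rewrite IHA; tauto.
  - rewrite IHA1, IHA2; tauto.
  - split; intros H y Hy; apply IHA; auto.
  - split; intros H y Hy Hb; destruct (H y Hy) as [z [Hz Hd]];
      try (apply IHA1; auto); exists z; split; auto; apply IHA2; auto.
Qed.

Definition coherent (L : label -> Prop) (f : label -> W) : Prop :=
  (forall s n, L (LR s n) -> L s /\ Rel (f s) (f (LR s n))) /\
  (forall s r n, L (LS s r n) -> L s /\ L r /\ Srel (f r) (f s) (f (LS s r n))).

Definition fact_holds (f : label -> W) (a : rfact) : Prop :=
  match a with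
  | FR a b => Rel (f a) (f b)
  | FS r a b => Srel (f r) (f a) (f b)
  end.

Lemma coherent_RSder (L : label -> Prop) (f : label -> W) (a : rfact) :
  coherent L f -> RSder C L a -> fact_holds f a.
Proof.
  intros [HR HS] Hd. induction Hd; simpl in *.
  - apply HR; auto.
  - eapply (fr_trans _ _ _ HF); eauto.
  - apply HS; auto.
  - apply (fr_S_refl _ _ _ HF); auto.
  - apply (fr_RS _ _ _ HF); auto.
  - eapply (fr_S_trans _ _ _ HF); eauto.
  - exact (proj1 (fr_S_dom _ _ _ HF _ _ _ IHHd)).
  - exact (proj2 (fr_S_dom _ _ _ HF _ _ _ IHHd)).
  - assert (Hat : forall a, hatom_holds Rel Srel (fun i => f (f0 i)) a <->
                             fact_holds f (atom_fact f0 a))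
      by (intros []; simpl; tauto).
    apply Hat, (HC h H _ (fun _ => I)). intros a Ha. apply Hat; auto.
Qed.

Lemma noetherian_maximal (Q : W -> Prop) (y0 : W) :
  Q y0 -> exists y, Q y /\ forall z, Rel y z -> ~ Q z.
Proof.
  intros H0. apply NNPP. intros Hn.
  assert (Hs : forall y : {y | Q y}, exists z : {z | Q z}, Rel (proj1_sig y) (proj1_sig z)).
  { intros [y Hy]. apply NNPP. intros Hn2. apply Hn. exists y. split; auto.
    intros z Hz Qz. apply Hn2. now exists (exist _ z Qz). }
  pose (g := fun y => proj1_sig (constructive_indefinite_description _ (Hs y))).
  apply (fr_noeth _ _ _ HF).
  exists (fun n => proj1_sig (Nat.iter n g (exist _ y0 H0))).
  intros n. simpl. unfold g at 1. exact (proj2_sig (constructive_indefinite_description _ (Hs _))).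
Qed.

Lemma maximal_R_counterexample (P : W -> Prop) (w : W) :
  ~ (forall y, Rel w y -> P y) ->
  exists y, Rel w y /\ ~ P y /\ forall z, Rel y z -> P z.
Proof.
  intros H. destruct (not_all_ex_not _ _ H) as [y0 Hy0].
  destruct (imply_to_and _ _ Hy0) as [Hw Hy].
  destruct (noetherian_maximal (fun y => Rel w y /\ ~ P y) y0) as [y [[Hy1 Hy2] Hmax]];
    [auto|].
  exists y. repeat split; auto. intros z Hz. apply NNPP. intros Hnz.
  apply (Hmax z Hz). split; [exact (fr_trans _ _ _ HF _ _ _ Hy1 Hz) | auto].
Qed.

Lemma maximal_S_counterexample (P : W -> Prop) (r w : W) :
  ~ (forall y, Srel r w y -> P y) ->
  exists y, Srel r w y /\ ~ P y /\ forall z, Rel y z -> P z.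
Proof.
  intros H. destruct (not_all_ex_not _ _ H) as [y0 Hy0].
  destruct (imply_to_and _ _ Hy0) as [Hw Hy].
  destruct (noetherian_maximal (fun y => Srel r w y /\ ~ P y) y0) as [y [[Hy1 Hy2] Hmax]];
    [auto|].
  exists y. repeat split; auto. intros z Hz. apply NNPP. intros Hnz.
  apply (Hmax z Hz). split; auto.
  apply (fr_S_trans _ _ _ HF _ _ y); auto.
  apply (fr_RS _ _ _ HF); auto. exact (proj2 (fr_S_dom _ _ _ HF _ _ _ Hy1)).
Qed.

Lemma maximal_rhd_counterexample (P Q : W -> Prop) (w : W) :
  ~ (forall y, Rel w y -> P y -> exists z, Srel w y z /\ Q z) ->
  exists y, Rel w y /\ P y /\ (forall z, Srel w y z -> ~ Q z) /\
    forall z, Rel y z -> ~ P z.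
Proof.
  intros H.
  set (Bad := fun y => Rel w y /\ P y /\ forall z, Srel w y z -> ~ Q z).
  assert (Hex : exists y0, Bad y0).
  { apply NNPP. intros Hne. apply H. intros y Hy Hb. apply NNPP. intros Hz.
    apply Hne. exists y. repeat split; auto. intros z Hsz Hd. apply Hz. eauto. }
  destruct Hex as [y0 Hy0].
  destruct (noetherian_maximal Bad y0 Hy0) as [y [[Hy1 [Hy2 Hy3]] Hmax]].
  exists y. repeat split; auto. intros z Hz Pz.
  apply (Hmax z Hz). repeat split; auto; [exact (fr_trans _ _ _ HF _ _ _ Hy1 Hz)|].
  intros u Hu. apply Hy3. apply (fr_S_trans _ _ _ HF _ _ z); auto.
  apply (fr_RS _ _ _ HF); auto.
Qed.

Lemma label_eq_dec (a b : label) : {a = b} + {a <> b}.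
Proof. repeat decide equality. Qed.

Definition upd (f : label -> W) (k : label) (y : W) : label -> W :=
  fun t => if label_eq_dec t k then y else f t.

Lemma upd_same (f : label -> W) (k : label) (y : W) : upd f k y k = y.
Proof. unfold upd. destruct (label_eq_dec k k); congruence. Qed.

Lemma upd_other (L : label -> Prop) (f : label -> W) (k : label) (y : W) :
  ~ L k -> forall t, L t -> upd f k y t = f t.
Proof. intros Hk t Ht. unfold upd. destruct (label_eq_dec t k); congruence. Qed.

Lemma xforces_upd (L : label -> Prop) (f : label -> W) (k : label) (y w : W) (A : xform) :
  ~ L k -> labels_in L A -> xforces (upd f k y) w A <-> xforces f w A.
Proof. intros Hk HA. symmetry. exact (xforces_agree L f _ A (upd_other L f k y Hk) HA w). Qed.

Lemma coherent_add_R (L : label -> Prop) (f : label -> W) (s : label) (n : nat) (y : W) :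
  coherent L f -> ~ L (LR s n) -> L s -> Rel (f s) y ->
  coherent (add_lab L (LR s n)) (upd f (LR s n) y).
Proof.
  intros [HR HS] Hk Hs Hy. split.
  - intros s' n' [H|H].
    + destruct (HR s' n' H) as [H1 H2]. split; [now left|].
      now rewrite !(upd_other L).
    + injection H as -> ->. split; [now left|]. now rewrite upd_same, (upd_other L).
  - intros s' r' n' [H|H]; [|discriminate].
    destruct (HS s' r' n' H) as [H1 [H2 H3]]. split; [now left|]. split; [now left|].
    now rewrite !(upd_other L).
Qed.

Lemma coherent_add_S (L : label -> Prop) (f : label -> W) (s rho : label) (n : nat) (y : W) :
  coherent L f -> ~ L (LS s rho n) -> L s -> L rho -> Srel (f rho) (f s) y ->
  coherent (add_lab L (LS s rho n)) (upd f (LS s rho n) y).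
Proof.
  intros [HR HS] Hk Hs Hrho Hy. split.
  - intros s' n' [H|H]; [|discriminate].
    destruct (HR s' n' H) as [H1 H2]. split; [now left|].
    now rewrite !(upd_other L).
  - intros s' r' n' [H|H].
    + destruct (HS s' r' n' H) as [H1 [H2 H3]]. split; [now left|]. split; [now left|].
      now rewrite !(upd_other L).
    + injection H as -> -> ->. split; [now left|]. split; [now left|].
      now rewrite upd_same, !(upd_other L).
Qed.

Definition entries_hold (L : label -> Prop) (f : label -> W) (es : list entry) : Prop :=
  forall e, In e es -> exists c g, entry_at e c = Some g /\
    L (fst g) /\ xforces f (f (fst g)) (snd g) /\ labels_in L (snd g).

Definition sound_extension (L : label -> Prop) (f : label -> W) (es : list entry) : Prop :=
  exists L' f', (forall t, L t -> L' t) /\ (forall t, L t -> f' t = f t) /\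
    coherent L' f' /\ entries_hold L' f' es /\
    forall t, L' t -> L t \/ exists B rest, es = Lin (t, B) :: rest.

Lemma sound_extension_same (L : label -> Prop) (f : label -> W) (es : list entry) :
  coherent L f -> entries_hold L f es -> sound_extension L f es.
Proof. intros Hc He. exists L, f. auto 6. Qed.

Lemma sound_extension_fresh (L : label -> Prop) (f : label -> W) (k : label) (y : W)
  (B : xform) (rest : list entry) :
  ~ L k -> coherent (add_lab L k) (upd f k y) ->
  entries_hold (add_lab L k) (upd f k y) (Lin (k, B) :: rest) ->
  sound_extension L f (Lin (k, B) :: rest).
Proof.
  intros Hk Hc He. exists (add_lab L k), (upd f k y).
  split; [now left|]. split; [now apply upd_other|]. do 2 (split; [assumption|]).
  intros t [Ht|<-]; [now left | right; eauto].
Qed.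

Section RuleSoundness.
Variables (L : label -> Prop) (f : label -> W) (s : label).
Hypothesis Hcoh : coherent L f.
Hypothesis Hs : L s.

Lemma add_lab_new (k : label) : add_lab L k k.
Proof. now right. Qed.

Lemma labels_in_add (k : label) (A : xform) : labels_in L A -> labels_in (add_lab L k) A.
Proof. apply labels_in_mono. now left. Qed.

Lemma neg_box_sound (n : nat) (B : xform) :
  ~ L (LR s n) -> labels_in L B -> ~ xforces f (f s) (XBox B) ->
  sound_extension L f [Lin (LR s n, XNeg B); Lin (LR s n, XBox B)].
Proof.
  intros Hk HB Hf.
  destruct (maximal_R_counterexample (fun y => xforces f y B) (f s) Hf) as [y [Hy1 [Hy2 Hy3]]].
  apply (sound_extension_fresh L f _ y); auto using coherent_add_R.
  intros e [<-|[<-|[]]]; exists 0; eexists; (split; [reflexivity|]);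
    simpl; rewrite upd_same; repeat split; auto using add_lab_new, labels_in_add.
  - now rewrite (xforces_upd L).
  - intros z Hz. rewrite (xforces_upd L); auto.
Qed.

Lemma neg_boxL_sound (rho : label) (n : nat) (B : xform) :
  ~ L (LS s rho n) -> L rho -> labels_in L B -> ~ xforces f (f s) (XBoxL rho B) ->
  sound_extension L f [Lin (LS s rho n, XNeg B); Lin (LS s rho n, XBox B)].
Proof.
  intros Hk Hrho HB Hf.
  destruct (maximal_S_counterexample (fun y => xforces f y B) (f rho) (f s) Hf)
    as [y [Hy1 [Hy2 Hy3]]].
  apply (sound_extension_fresh L f _ y); auto using coherent_add_S.
  intros e [<-|[<-|[]]]; exists 0; eexists; (split; [reflexivity|]);
    simpl; rewrite upd_same; repeat split; auto using add_lab_new, labels_in_add.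
  - now rewrite (xforces_upd L).
  - intros z Hz. rewrite (xforces_upd L); auto.
Qed.

Lemma neg_rhd_sound (n : nat) (B D : xform) :
  ~ L (LR s n) -> labels_in L B -> labels_in L D -> ~ xforces f (f s) (XRhd B D) ->
  sound_extension L f [Lin (LR s n, B); Lin (LR s n, XBoxL s (XNeg D));
                       Lin (LR s n, XBox (XNeg B))].
Proof.
  intros Hk HB HD Hf.
  destruct (maximal_rhd_counterexample (fun y => xforces f y B) (fun z => xforces f z D)
              (f s) Hf) as [y [Hy1 [Hy2 [Hy3 Hy4]]]].
  assert (Hfs : upd f (LR s n) y s = f s) by (apply (upd_other L); auto).
  apply (sound_extension_fresh L f _ y); auto using coherent_add_R.
  intros e [<-|[<-|[<-|[]]]]; exists 0; eexists; (split; [reflexivity|]);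
    simpl; rewrite upd_same; repeat split; auto using add_lab_new, labels_in_add.
  - now rewrite (xforces_upd L).
  - rewrite Hfs. intros t Ht. rewrite (xforces_upd L); auto.
  - now left.
  - intros z Hz. rewrite (xforces_upd L); auto.
Qed.

End RuleSoundness.

Lemma rule_ext_sound (T : tab) (p : pos) (f : label -> W) (s : label) (A : xform)
  (es : list entry) :
  coherent (lab T p) f -> lab T p s -> xforces f (f s) A -> labels_in (lab T p) A ->
  rule_ext C T s A p es -> sound_extension (lab T p) f es.
Proof.
  intros Hc Hs HA HL Hr. unfold rule_ext in Hr. set (L := lab T p) in *.
  assert (HRS : forall a, RSder C L a -> fact_holds f a) by (intros; eapply coherent_RSder; eauto).
  destruct A as [v|[v|B|B D|B|B D|rho B]|B D|B|B D|rho B]; simpl in HA, HL;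
    [ | | | | destruct Hr as [n [[Hn _] ->]]; apply neg_box_sound; tauto
    | destruct Hr as [n [[Hn _] ->]]; apply neg_rhd_sound; tauto
    | destruct Hr as [n [[Hn _] ->]]; apply neg_boxL_sound; tauto | | | | ];
    apply sound_extension_same; auto.
  - subst es. intros e [].
  - subst es. intros e [].
  - subst es. intros e [<-|[]]. exists 0, (s, B). simpl. repeat split; auto. now apply NNPP.
  - subst es. intros e [<-|[<-|[]]]; exists 0; eexists; (split; [reflexivity|]);
      simpl; repeat split; try tauto; apply NNPP; tauto.
  - subst es. intros e [<-|[]]. destruct (classic (xforces f (f s) B)) as [Hb|Hb].
    + exists 1, (s, D). simpl. tauto.
    + exists 0, (s, XNeg B). simpl. tauto.
  - destruct Hr as [ts [[_ Hts] ->]]. intros e He.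
    apply in_map_iff in He. destruct He as [t [<- Ht]]. apply Hts in Ht as [Lt Rt].
    exists 0, (t, B). simpl. repeat split; auto. apply HA, (HRS _ Rt).
  - destruct Hr as [ts [[_ Hts] ->]]. intros e He. destruct HL as [HB HD].
    apply in_map_iff in He. destruct He as [t [<- Ht]]. apply Hts in Ht as [Lt Rt].
    destruct (classic (xforces f (f t) B)) as [Hb|Hb].
    + exists 1, (t, XNeg (XBoxL s (XNeg D))). simpl. repeat split; auto.
      intros Hall. destruct (HA (f t) (HRS _ Rt) Hb) as [z [Hz Hd]]. exact (Hall z Hz Hd).
    + exists 0, (t, XNeg B). simpl. auto.
  - destruct Hr as [ts [[_ Hts] ->]]. intros e He. destruct HL as [Hrho HB].
    apply in_map_iff in He. destruct He as [t [<- Ht]]. apply Hts in Ht as [Lt St].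
    exists 0, (t, B). simpl. repeat split; auto. apply HA, (HRS _ St).
Qed.

Definition satisfiable (T : tab) (p : pos) : Prop :=
  is_leaf T p /\ exists f, coherent (lab T p) f /\
    forall r nd, prefix r p -> T r = Some nd ->
      xforces f (f (nlab nd)) (nfor nd) /\ labels_in (lab T p) (nfor nd).

Section SatisfiableUpdate.
Variables (T T' : tab) (q : pos) (nd : node) (E : pos -> list entry).
Hypothesis HT : update C T T' q nd E.
Hypothesis Htc : prefix_closed T.

Let Pr (p : pos) : Prop := processed T q (nfor nd) p.

Lemma update_satisfiable (p w : pos) (f f' : label -> W) (L' : label -> Prop) :
  is_leaf T p -> (Pr p -> full_path (E p) w) -> (~ Pr p -> w = []) ->
  (forall r m, prefix r p -> T r = Some m ->
     xforces f (f (nlab m)) (nfor m) /\ labels_in (lab T p) (nfor m)) ->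
  (forall t, lab T p t -> L' t) -> (forall t, lab T p t -> f' t = f t) ->
  coherent L' f' ->
  (forall u g, u <> [] -> prefix u w -> grown (E p) u = Some g ->
     L' (fst g) /\ xforces f' (f' (fst g)) (snd g) /\ labels_in L' (snd g)) ->
  (forall t, L' t -> lab T p t \/
     exists u g, u <> [] /\ prefix u w /\ grown (E p) u = Some g /\ fst g = t) ->
  satisfiable T' (p ++ w).
Proof.
  intros Hl Hv Hnv Htrue Hsub Hagree Hcoh Hnew Hcover.
  pose proof (update_branch_nodes C T T' q nd E HT p w Htc Hl Hv Hnv) as Hnodes.
  assert (Hlab : forall t, lab T' (p ++ w) t <-> L' t).
  { intros t; split.
    - intros [r [nd' [Hr [Hnd <-]]]].
      destruct (Hnodes r nd' Hr Hnd) as [[m [Hm1 [Hm2 [-> _]]]]|[u [g [Hu [Hu2 [Hg [-> _]]]]]]].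
      + apply Hsub. now exists r, m.
      + now apply (Hnew u g).
    - intros Ht. destruct (Hcover t Ht) as [[r [m [Hr [Hm <-]]]]|[u [g [Hu [Hu2 [Hg <-]]]]]].
      + destruct (update_keeps C T T' q nd E HT r m Hm) as [m' [Hm' [<- _]]].
        exists r, m'. repeat split; auto. eapply prefix_trans; [exact Hr | apply prefix_app].
      + exists (p ++ u), (mkNode (fst g) (snd g) Awake). split.
        * destruct Hu2 as [v ->]. rewrite app_assoc. apply prefix_app.
        * split; auto. eapply update_new_nodes; eauto. }
  split; [exact (update_leaf C T T' q nd E HT p w Htc Hl Hv Hnv)|].
  exists f'. split.
  - destruct Hcoh as [HR HS]. split; intros *; rewrite !Hlab; auto.
  - assert (HL' : forall A, labels_in L' A -> labels_in (lab T' (p ++ w)) A)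
      by (intros A; apply labels_in_mono; intros t; apply Hlab).
    intros r nd' Hr Hnd.
    destruct (Hnodes r nd' Hr Hnd) as [[m [Hm1 [Hm2 [-> ->]]]]|[u [g [Hu [Hu2 [Hg [-> ->]]]]]]].
    + destruct (Htrue r m Hm1 Hm2) as [X1 X2].
      rewrite (Hagree (nlab m)) by (now exists r, m). split.
      * now apply (xforces_agree (lab T p) f f').
      * apply HL'. now apply (labels_in_mono (lab T p)).
    + destruct (Hnew u g Hu Hu2 Hg) as [X1 [X2 X3]]. auto.
Qed.

Lemma update_satisfiable_branch (p : pos) : satisfiable T p -> T q = Some nd ->
  (forall p, Pr p -> rule_ext C T (nlab nd) (nfor nd) p (E p)) ->
  exists p', prefix p p' /\ satisfiable T' p'.
Proof.
  intros [Hl [f [Hcoh Htrue]]] Hq Hrule.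
  destruct (classic (Pr p)) as [HP|HP].
  2:{ exists (p ++ []). split; [apply prefix_app|].
      apply (update_satisfiable p [] f f (lab T p)); auto; try contradiction.
      intros u g Hu Hpre. apply prefix_nil_inv in Hpre. contradiction. }
  assert (Hqp : prefix q p) by apply HP.
  destruct (Htrue q nd Hqp Hq) as [X Xl].
  destruct (rule_ext_sound T p f (nlab nd) (nfor nd) (E p)) as
      [L' [f' [Hsub [Hagree [Hcoh' [Hhold Hcover]]]]]]; auto.
  { now exists q, nd. }
  destruct (full_path_choice _ _ Hhold) as [w [Hw Hwtrue]].
  exists (p ++ w). split; [apply prefix_app|].
  apply (update_satisfiable p w f f' L'); auto.
  - intros HnP. contradiction.
  - intros u g _ Hu Hg. exact (Hwtrue u g Hg Hu).
  - intros t Ht. destruct (Hcover t Ht) as [Hold|[B [rest Hes]]]; [now left | right].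
    rewrite Hes in Hw |- *. destruct (full_path_head_lin _ _ _ Hw) as [H0 Hg0].
    exists [0], (t, B). repeat split; auto. discriminate.
Qed.

End SatisfiableUpdate.

Lemma step_satisfiable (T T' : tab) (p : pos) :
  prefix_closed T -> step C T T' -> satisfiable T p ->
  exists p', prefix p p' /\ satisfiable T' p'.
Proof.
  intros Htc Hs Hsat. destruct (step_cases _ _ _ Hs) as [Heq|[q [nd [E [Hq [Hrule HT]]]]]].
  - assert (T' = T) as -> by (apply functional_extensionality; auto).
    exists p. split; auto using prefix_refl.
  - eapply update_satisfiable_branch; eauto.
Qed.

Section Countermodel.
Variables (stage : nat -> tab) (A : form) (x : W).
Hypothesis Hsys : systematic C [XNeg (emb A)] stage.
Hypothesis Hnot : ~ forces Rel Srel V x A.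

Lemma stage_prefix_closed (n : nat) : prefix_closed (stage n).
Proof.
  induction n.
  - intros r s. rewrite !(proj1 Hsys). destruct r as [|[|c] r]; simpl; congruence.
  - eapply step_prefix_closed; eauto. apply (proj2 Hsys).
Qed.

Lemma stage_keeps (n m : nat) (r : pos) (nd : node) : stage n r = Some nd -> n <= m ->
  exists nd', stage m r = Some nd' /\ nlab nd' = nlab nd /\ nfor nd' = nfor nd.
Proof.
  intros H Hle. induction Hle as [|m _ [m1 [Hm1 [Hm2 Hm3]]]]; [now exists nd|].
  destruct (step_keeps _ _ _ r m1 (proj2 Hsys m) Hm1) as [m2 [H2 [H3 H4]]].
  exists m2. split; [auto | split; congruence].
Qed.

Lemma stage0_satisfiable : satisfiable (stage 0) [].
Proof.
  pose proof (proj1 Hsys) as H0.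
  assert (Hroot : forall r nd, prefix r [] -> stage 0 r = Some nd ->
                    nd = mkNode L0 (XNeg (emb A)) Awake).
  { intros r nd Hr Hnd. apply prefix_nil_inv in Hr. subst r.
    rewrite H0 in Hnd. now injection Hnd as <-. }
  assert (Hlab : forall t, lab (stage 0) [] t -> t = L0).
  { intros t [r [nd [Hr [Hnd <-]]]]. now rewrite (Hroot r nd Hr Hnd). }
  split; [split; [rewrite H0; discriminate | intros i; rewrite H0; now destruct i]|].
  exists (fun _ => x). split.
  - split; intros * Hs; apply Hlab in Hs; discriminate.
  - intros r nd Hr Hnd. rewrite (Hroot r nd Hr Hnd). simpl.
    rewrite xforces_emb. auto using labels_in_emb.
Qed.

Definition next_branch (n : nat) (b : {p | satisfiable (stage n) p}) :
  {p' | prefix (proj1_sig b) p' /\ satisfiable (stage (S n)) p'} :=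
  constructive_indefinite_description _
    (step_satisfiable _ _ (proj1_sig b) (stage_prefix_closed n) (proj2 Hsys n) (proj2_sig b)).

Fixpoint branch_chain (n : nat) : {p | satisfiable (stage n) p} :=
  match n as n0 return {p | satisfiable (stage n0) p} with
  | 0 => exist _ [] stage0_satisfiable
  | S n' => let b := next_branch n' (branch_chain n') in
            exist _ (proj1_sig b) (proj2 (proj2_sig b))
  end.

Definition chain_leaf (n : nat) : pos := proj1_sig (branch_chain n).

Lemma chain_leaf_satisfiable (n : nat) : satisfiable (stage n) (chain_leaf n).
Proof. exact (proj2_sig (branch_chain n)). Qed.

Lemma chain_leaf_mono (n m : nat) : n <= m -> prefix (chain_leaf n) (chain_leaf m).
Proof.
  intros H. induction H; [apply prefix_refl|].
  eapply prefix_trans; [eassumption|]. exact (proj1 (proj2_sig (next_branch m (branch_chain m)))).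
Qed.

Definition chain_branch (r : pos) : Prop := exists n, prefix r (chain_leaf n).

Lemma chain_branch_union : union_branch stage chain_branch.
Proof.
  split; [|split; [|split; [|split]]].
  - exists 0. apply prefix_nil.
  - intros r [n Hn]. exists n. eapply prefix_closed_prefix; eauto;
      [apply stage_prefix_closed | apply (chain_leaf_satisfiable n)].
  - intros r r' [n Hn] Hr'. exists n. eapply prefix_trans; eauto.
  - intros r1 r2 [n1 H1] [n2 H2]. apply (prefix_total _ _ (chain_leaf (max n1 n2))).
    + eapply prefix_trans; [exact H1 | apply chain_leaf_mono; lia].
    + eapply prefix_trans; [exact H2 | apply chain_leaf_mono; lia].
  - intros r [n Hn] [i [m Hm]].
    set (N := max n m).
    assert (HN : stage N (r ++ [i]) <> None).
    { destruct (stage m (r ++ [i])) as [nd|] eqn:Es; [|congruence].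
      destruct (stage_keeps m N _ _ Es ltac:(lia)) as [nd' [-> _]]. discriminate. }
    assert (Hp : prefix r (chain_leaf N))
      by (eapply prefix_trans; [exact Hn | apply chain_leaf_mono; lia]).
    destruct Hp as [[|j u] Hu].
    + exfalso. rewrite app_nil_r in Hu. apply HN. rewrite <- Hu.
      apply (chain_leaf_satisfiable N).
    + exists j, N, u. rewrite Hu, <- app_assoc. reflexivity.
Qed.

Lemma chain_branch_open : ~ branch_closed stage chain_branch.
Proof.
  intros [r1 [r2 [n [n1 [n2 [[a Ha] [[b Hb] [H1 [H2 [Hl Hf]]]]]]]]]].
  set (N := max n (max a b)).
  destruct (stage_keeps n N _ _ H1 ltac:(lia)) as [m1 [Hm1 [Hm1l Hm1f]]].
  destruct (stage_keeps n N _ _ H2 ltac:(lia)) as [m2 [Hm2 [Hm2l Hm2f]]].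
  destruct (chain_leaf_satisfiable N) as [_ [f [_ Htrue]]].
  destruct (Htrue r1 m1) as [X1 _]; auto.
  { eapply prefix_trans; [exact Ha | apply chain_leaf_mono; lia]. }
  destruct (Htrue r2 m2) as [X2 _]; auto.
  { eapply prefix_trans; [exact Hb | apply chain_leaf_mono; lia]. }
  rewrite Hm2f, Hf, Hm2l, <- Hl, <- Hm1l, <- Hm1f in X2. exact (X2 X1).
Qed.

End Countermodel.
End Semantics.

Theorem mainTheorem4 (X : form -> Prop) (C : horn -> Prop) (A : form)
  (stage : nat -> tab) :
  horn_witness X C ->
  systematic C [XNeg (emb A)] stage ->
  tableau_closes stage ->
  forall (W : Type) (Rel : W -> W -> Prop) (Srel : W -> W -> W -> Prop)
         (V : nat -> W -> Prop) (x : W),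
    ILFrame W Rel Srel ->
    (forall h, C h -> horn_holds_in (fun _ => True) Rel Srel h) ->
    forces Rel Srel V x A.
Proof.
  intros _ Hsys Hcl W Rel Srel V x HF HC. apply NNPP. intros Hnot.
  apply (chain_branch_open C W Rel Srel V HF HC stage A x Hsys Hnot).
  apply Hcl, chain_branch_union.
Qed.
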